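(* Let $I$ be a finite set and $X$ a finite or countable set. Put $V=X\sqcup(I\times\mathbb{N})$ and $V_n=X\sqcup(I\times J_n)$, where $J_n=\{1,\dots,n\}$, $J_0=\varnothing$. For a set $Y$ let $S(Y)$ be the group of finitely supported permutations of $Y$; let $S_\infty=S(\mathbb{N})$ and $S_n\subset S_\infty$ the permutations of $J_n$. Let $S_\infty$ act on $V$ by $\sigma(i,m)=(i,\sigma(m))$ on $I\times\mathbb{N}$ and trivially on $X$; this identifies $S_\infty$ with a subgroup of $S(V)$. Let $G_\infty$ be any subgroup of $S(V)$ containing $S_\infty$, set $G_n=G_\infty\cap S(V_n)$ (elements fixing every point outside $V_n$) and $K_n=S_n\subseteq G_n$. Let $G_n/\!/K_n$ be the set of orbits of $K_n$ acting on $G_n$ by conjugation and $\mathcal{C}=\coprod_{n\ge0}G_n/\!/K_n$ (disjoint union). For $c\in G_n/\!/K_n$ with representative $g\in G_n$ and $N\ge0$ define $A_N[c]\in\mathbb{C}(G_N)$ by $A_N[c]=\frac{1}{(N-n)!}\sum_{\tau\in K_N}\tau g\tau^{-1}$ if $N\ge n$ (with $g$ regarded as an element of $G_N\supseteq G_n$), and $A_N[c]=0$ if $N<n$. Then there exist non-negative integers $a^{e}_{c,d}$ ($c,d,e\in\mathcal{C}$), not depending on $N$ and with only finitely many $e$ having $a^e_{c,d}\ne0$ for fixed $c,d$, such that: (i) for every $N\ge0$ and all $c,d\in\mathcal{C}$, $A_N[c]*A_N[d]=\sum_{e\in\mathcal{C}}a^e_{c,d}A_N[e]$ in $\mathbb{C}(G_N)$;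 (ii) on the complex vector space with basis $\{A[c]:c\in\mathcal{C}\}$, the formula $A[c]*A[d]=\sum_e a^e_{c,d}A[e]$ (extended bilinearly) defines a structure of an associative algebra.
   Context: $\mathbb{C}(G)$ denotes the group algebra of a group $G$ (finitely supported complex functions) with convolution $*$. $A_N[c]$ does not depend on the choice of representative $g$. *)

From HB Require Import structures.
From mathcomp Require Import all_boot all_order all_algebra all_fingroup.
From mathcomp Require Import boolp complex Rstruct.
Set Implicit Arguments. Unset Strict Implicit. Unset Printing Implicit Defensive.
Import Order.TTheory GRing.Theory Num.Theory.
Local Open Scope ring_scope.

Definition Cplx : numClosedFieldType := (Rdefinitions.R)[i].

Section Defs.
Variables (I : finType) (X : countType).

(* V = X ⊔ (I × ℕ); the paper's ℕ = {1,2,...} is relabelled as Rocq's nat = {0,1,...},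
   so J_n = {1..n} becomes {0..n-1}. *)
Definition V := (X + I * nat)%type.

Definition inVn (n : nat) (v : V) : bool :=
  match v with inl _ => true | inr (_, m) => (m < n)%N end.

Definition fsupp (f : V -> V) : Prop :=
  exists s : seq V, forall v, v \notin s -> f v = v.
Definition SV (f : V -> V) : Prop := bijective f /\ fsupp f.

Definition is_subgroup (G : (V -> V) -> Prop) : Prop :=
  [/\ (forall f, G f -> SV f), G id,
      (forall f g, G f -> G g -> G (f \o g)) &
      (forall f g, G f -> cancel f g -> cancel g f -> G g)].

Definition lift_nat (s : nat -> nat) : V -> V :=
  fun v => match v with inl x => inl x | inr (i, m) => inr (i, s m) end.

Definition contains_Sinf (G : (V -> V) -> Prop) : Prop :=
  forall s : nat -> nat, bijective s ->
    (exists l : seq nat, forall k, k \notin l -> s k = k) -> G (lift_nat s).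

Definition Gn (G : (V -> V) -> Prop) (n : nat) (g : V -> V) : Prop :=
  G g /\ forall v, ~~ inVn n v -> g v = v.

Definition permK (n : nat) (t : {perm 'I_n}) : V -> V :=
  lift_nat (fun m => match (insub m : option 'I_n) with
                     | Some k => nat_of_ord (t k) | None => m end).

Definition conjK (n : nat) (t : {perm 'I_n}) (g : V -> V) : V -> V :=
  permK t \o g \o permK t^-1.

Definition orbit_of (ng : nat * (V -> V)) : (nat * (V -> V) -> Prop) :=
  fun mh => mh.1 = ng.1 /\ exists t : {perm 'I_ng.1}, mh.2 = conjK t ng.2.

Definition Cls (G : (V -> V) -> Prop) : Type :=
  {S : (nat * (V -> V) -> Prop) | exists ng, Gn G ng.1 ng.2 /\ S = orbit_of ng}.

Definition clsrep (G : (V -> V) -> Prop) (c : Cls G) : nat * (V -> V) :=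
  projT1 (cid (proj2_sig c)).

(* Elements of the group algebra ℂ(G_N) written as formal finite linear
   combinations of group elements; two formal sums represent the same element
   iff all their coefficients agree. *)
Definition fsum := seq (Cplx * (V -> V)).
Definition coef (s : fsum) (h : V -> V) : Cplx :=
  \sum_(p <- s) (if `[< p.2 = h >] then p.1 else 0).
Definition feq (s t : fsum) : Prop := forall h, coef s h = coef t h.
Definition fmul (s t : fsum) : fsum :=
  [seq (p.1 * q.1, p.2 \o q.2) | p <- s, q <- t].
Definition fscale (k : Cplx) (s : fsum) : fsum := [seq (k * p.1, p.2) | p <- s].

Definition AN (N : nat) (ng : nat * (V -> V)) : fsum :=
  if (ng.1 <= N)%N then
    [seq ((((N - ng.1)`!)%:R)^-1, conjK t ng.2) | t : {perm 'I_N}]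
  else [::].

End Defs.

(* The coefficient of y in A_N[n, g] is the number of injections
   f : J_n -> J_N such that g, transported along f (that is, conjugated by any
   permutation of J_N extending f), equals y: restriction from S_N to
   injections has fibres of size (N - n)!, which the normalisation cancels.
   Hence A_N[c] * A_N[d] counts pairs (phi, chi) of injections.  Sort such a
   pair by its overlap pattern psi: which points of J_m are sent by chi into
   the image of phi, and where, the other points being numbered n, n + 1, ...
   in increasing order.  Pairs with pattern psi correspond to single
   injections of J_k, k = n + #(new points), and the product g * psi(h) lies
   in G_k; so every pattern contributes A_N of one class, with a multiplicity
   that does not depend on N.  Associativity of the structure constants comes
   from counting triples of injections in two ways, together with the linear
   independence of the A_N[e] over all N, which is triangular in the size n
   of e: A_N[e] = 0 for N < n, and A_n[e] is supported on the class of e. *)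

From Pilot Require Import Defs.
From HB Require Import structures.
From mathcomp Require Import all_boot all_order all_algebra all_fingroup.
From mathcomp Require Import boolp complex Rstruct.
Import GRing.Theory Num.Theory.
Set Implicit Arguments. Unset Strict Implicit. Unset Printing Implicit Defensive.
Local Open Scope ring_scope.

Lemma sumr_undup_count (T : eqType) (M : nmodType) (s : seq T) (F : T -> M) :
  \sum_(x <- undup s) F x *+ count_mem x s = \sum_(x <- s) F x.
Proof.
rewrite -[RHS]big_undup_iterop_count; apply: eq_bigr => x _.
by case: (count_mem x s) => [|k]; rewrite ?mulr0n // iteropS iter_addr -mulrSr.
Qed.

Lemma sum_uniq_sub (T : eqType) (M : nmodType) (s U : seq T) (F : T -> M) :
  uniq s -> uniq U -> {subset s <= U} -> (forall x, x \notin s -> F x = 0) ->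
  \sum_(x <- s) F x = \sum_(x <- U) F x.
Proof.
move=> us uU sU F0; rewrite [RHS](bigID (mem s)) /= [X in _ = _ + X]big1 ?addr0; last first.
  by move=> x /F0.
rewrite -[RHS]big_filter; apply/perm_big/uniq_perm; rewrite ?filter_uniq // => x.
by rewrite mem_filter andb_idr // => /sU.
Qed.

Lemma sum_regroup (T : eqType) (R : pzSemiRingType) (s U : seq T) (A : T -> nat)
    (B : T -> seq T) (C : T -> T -> nat) (F : T -> R) :
  uniq U -> (forall e, uniq (B e)) -> (forall e, e \in s -> {subset B e <= U}) ->
  (forall e x, C e x != 0%N -> x \in B e) ->
  \sum_(e <- s) (A e)%:R * \sum_(x <- B e) (C e x)%:R * F x =
  \sum_(x <- U) (\sum_(e <- s) A e * C e x)%N%:R * F x.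
Proof.
move=> uU uB sBU CB; rewrite big_seq.
under eq_bigr => e es.
  rewrite (sum_uniq_sub (uB e) uU (sBU e es)) => [|x xB]; last first.
    by rewrite (_ : C e x = 0%N) ?mul0r //; apply/eqP; apply: contraNT xB; apply: CB.
  rewrite mulr_sumr.
over.
rewrite -big_seq exchange_big; apply: eq_bigr => x _.
by rewrite natr_sum mulr_suml; apply: eq_bigr => e _; rewrite natrM mulrA.
Qed.

Lemma In_mem (T : eqType) (x : T) (s : seq T) : List.In x s <-> x \in s.
Proof.
elim: s => [|y s IH] //=; rewrite inE.
by split => [[<-|/IH->]|/predU1P[->|/IH]]; rewrite ?eqxx ?orbT //; [left | right].
Qed.

Lemma uniq_NoDup (T : eqType) (s : seq T) : uniq s -> List.NoDup s.
Proof.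
elim: s => [|x s IH] /=; first by constructor.
by case/andP => xs us; constructor; [rewrite In_mem; apply/negP | exact: IH].
Qed.

Lemma asbool_comp_r (T U : Type) (a b : T -> U) (u u' : T -> T) :
  cancel u u' -> cancel u' u -> `[< a \o u = b >] = `[< a = b \o u' >].
Proof.
move=> uK uK'; apply: asbool_equiv_eq; split => [<-|->]; apply: funext => v /=.
  by rewrite uK'.
by rewrite uK.
Qed.

Lemma asbool_comp_l (T U : Type) (a b : T -> U) (u u' : U -> U) :
  cancel u u' -> cancel u' u -> `[< u \o a = b >] = `[< a = u' \o b >].
Proof.
move=> uK uK'; apply: asbool_equiv_eq; split => [<-|->]; apply: funext => v /=.
  by rewrite uK.
by rewrite uK'.
Qed.

(** * Permutations of J_n and injections J_k -> J_N *)

Definition natperm n (t : {perm 'I_n}) (m : nat) : nat :=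
  if insub m is Some k then nat_of_ord (t k) else m.

Lemma natpermE n (t : {perm 'I_n}) (i : 'I_n) : natperm t i = t i.
Proof. by rewrite /natperm valK. Qed.

Lemma natperm_out n (t : {perm 'I_n}) m : (n <= m)%N -> natperm t m = m.
Proof. by move=> h; rewrite /natperm insubN // -leqNgt. Qed.

Lemma natpermM n (s t : {perm 'I_n}) m : natperm (s * t) m = natperm t (natperm s m).
Proof.
case: (ltnP m n) => h; last by rewrite !natperm_out.
by rewrite -[m]/(nat_of_ord (Ordinal h)) !natpermE permM.
Qed.

Lemma natperm1 n m : natperm (1 : {perm 'I_n}) m = m.
Proof.
case: (ltnP m n) => h; last by rewrite natperm_out.
by rewrite -[m]/(nat_of_ord (Ordinal h)) natpermE perm1.
Qed.

Lemma natpermK n (t : {perm 'I_n}) : cancel (natperm t) (natperm t^-1).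
Proof. by move=> m; rewrite -natpermM mulgV natperm1. Qed.

Lemma natpermKV n (t : {perm 'I_n}) : cancel (natperm t^-1) (natperm t).
Proof. by move=> m; rewrite -natpermM mulVg natperm1. Qed.

Definition injs k N := [set f : {ffun 'I_k -> 'I_N} | injectiveb f].

Lemma injs_leq k N (f : {ffun 'I_k -> 'I_N}) : injective f -> (k <= N)%N.
Proof. by move=> fi; have := leq_card f fi; rewrite !card_ord. Qed.

Lemma injs_small k N f : (N < k)%N -> (f \in injs k N) = false.
Proof.
move=> Nk; apply/negP; rewrite inE => /injectiveP /injs_leq.
by rewrite leqNgt Nk.
Qed.

Lemma natperm_extend_nat N k (f : nat -> nat) : (k <= N)%N ->
  (forall i, (i < k)%N -> (f i < N)%N) ->
  (forall i j, (i < k)%N -> (j < k)%N -> f i = f j -> i = j) ->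
  exists t : {perm 'I_N}, forall i, (i < k)%N -> natperm t i = f i.
Proof.
elim: k => [|k IH] kN fN fI; first by exists 1%g.
have [|t ht] := IH (ltnW kN) (fun i ik => fN i (ltnW ik)).
  by move=> i j ik jk; apply: fI; apply: ltnW.
pose a := t (Ordinal kN); pose b := Ordinal (fN k (ltnSn k)).
exists (t * tperm a b)%g => j; rewrite ltnS leq_eqVlt => /predU1P[->|jk].
  by rewrite -[k]/(nat_of_ord (Ordinal kN)) natpermE permM tpermL.
have jN : (j < N)%N := ltn_trans jk kN.
have tj : t (Ordinal jN) = f j :> nat by rewrite -natpermE ht.
rewrite -[j]/(nat_of_ord (Ordinal jN)) natpermE permM tpermD //.
- by apply/eqP => /perm_inj /(congr1 val) /= ejk; move: jk; rewrite ejk ltnn.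
- apply/eqP => /(congr1 val) /=; rewrite tj => /(fI _ _ (ltnSn k) (ltnW jk)) ekj.
  by move: jk; rewrite ekj ltnn.
Qed.

Lemma natperm_extend k N (f : {ffun 'I_k -> 'I_N}) : injective f ->
  exists t : {perm 'I_N}, forall i : 'I_k, natperm t i = f i.
Proof.
move=> fi; pose g j := if insub j is Some i then nat_of_ord (f i) else j.
have gE (i : 'I_k) : g i = f i by rewrite /g valK.
have [a ak|a b ak bk|t ht] := natperm_extend_nat (injs_leq fi) (f := g).
- by rewrite -[a]/(nat_of_ord (Ordinal ak)) gE.
- rewrite -[a]/(nat_of_ord (Ordinal ak)) -[b]/(nat_of_ord (Ordinal bk)) !gE.
  by move/val_inj/fi/(congr1 val).
by exists t => i; rewrite ht ?gE.
Qed.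

(* For injective f, a permutation extending f (natperm_ext); the identity otherwise. *)
Definition perm_ext k N (f : {ffun 'I_k -> 'I_N}) : {perm 'I_N} :=
  odflt 1%g [pick t : {perm 'I_N} | [forall i : 'I_k, natperm t i == f i]].

Lemma natperm_ext k N (f : {ffun 'I_k -> 'I_N}) (i : 'I_k) : injective f ->
  natperm (perm_ext f) i = f i.
Proof.
move=> fi; rewrite /perm_ext; case: pickP => [t /forallP /(_ i) /eqP //|none].
have [t ht] := natperm_extend fi.
by case/negP: (negbT (none t)); apply/forallP => j; rewrite ht.
Qed.

Definition perm_prefix k N (H : (k <= N)%N) (t : {perm 'I_N}) : {ffun 'I_k -> 'I_N} :=
  [ffun i => t (widen_ord H i)].

Lemma perm_prefix_inj k N (H : (k <= N)%N) t : injective (perm_prefix H t).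
Proof. by move=> i j; rewrite !ffunE => /perm_inj /(congr1 val) /= /val_inj. Qed.

Lemma natperm_prefix k N (H : (k <= N)%N) t (i : 'I_k) :
  natperm t i = perm_prefix H t i.
Proof. by rewrite ffunE -natpermE. Qed.

Lemma card_ltn N k : (k <= N)%N -> #|[set i : 'I_N | (i < k)%N]| = k.
Proof.
move=> H; have -> : [set i : 'I_N | (i < k)%N] = widen_ord H @: [set: 'I_k].
  apply/setP => i; rewrite inE; apply/idP/imsetP => [ik|[j _ ->] //=].
  by exists (Ordinal ik); rewrite ?in_setT //; apply: val_inj.
by rewrite card_imset ?cardsT ?card_ord // => i j /(congr1 val) /= /val_inj.
Qed.

Lemma card_interval N a b : (a <= b)%N -> (b <= N)%N ->
  #|[set i : 'I_N | (a <= i)%N && (i < b)%N]| = (b - a)%N.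
Proof.
move=> ab bN.
have -> : [set i : 'I_N | (a <= i)%N && (i < b)%N] =
          [set i : 'I_N | (i < b)%N] :\: [set i : 'I_N | (i < a)%N].
  by apply/setP => i; rewrite !inE -leqNgt andbC.
rewrite cardsD card_ltn //; congr (_ - _)%N.
rewrite -[RHS](card_ltn (leq_trans ab bN)); apply: eq_card => i; rewrite !inE.
by case: (ltnP i a) => ia; rewrite ?andbT ?andbF // (leq_trans ia ab).
Qed.

(* The fibre over an injection f is a coset of the pointwise stabiliser of J_k. *)
Lemma sum_perm_prefix (M : nmodType) k N (H : (k <= N)%N)
    (F : {ffun 'I_k -> 'I_N} -> M) :
  \sum_(t : {perm 'I_N}) F (perm_prefix H t) = (\sum_(f in injs k N) F f) *+ (N - k)`!.
Proof.
rewrite (partition_big (perm_prefix H) (mem (injs k N))); last first.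
  by move=> t _; rewrite !inE; apply/injectiveP; apply: perm_prefix_inj.
rewrite -sumrMnl; apply: eq_bigr => f; rewrite !inE => /injectiveP fi.
rewrite (eq_bigr (fun _ => F f)) => [|t /eqP -> //]; rewrite sumr_const.
congr (_ *+ _); pose A := [set i : 'I_N | (k <= i)%N]; pose t0 := perm_ext f.
have t0f : perm_prefix H t0 = f.
  by apply/ffunP => i; apply: ord_inj; rewrite -natperm_prefix natperm_ext.
have -> : #|[pred t | perm_prefix H t == f]| = #|(fun s => s * t0)%g @: perm_on A|.
  apply: eq_card => t; rewrite inE /=; apply/eqP/imsetP => [tf|[s sA ->]].
    exists (t * t0^-1)%g; last by rewrite mulgVK.
    apply/subsetP => i; rewrite !inE; apply: contraR; rewrite -ltnNge => ik.
    have wi : widen_ord H (Ordinal ik) = i by apply: val_inj.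
    have := congr1 (fun g : {ffun 'I_k -> 'I_N} => g (Ordinal ik)) (etrans tf (esym t0f)).
    by rewrite !ffunE wi permM => ->; rewrite permK.
  apply/ffunP => i; rewrite -t0f !ffunE permM (out_perm sA) //.
  by rewrite inE -ltnNge /=.
rewrite card_imset ?card_perm; last exact: mulIg.
rewrite -(card_interval H (leqnn N)); congr (_ `!); apply: eq_card => i.
by rewrite !inE ltn_ord andbT.
Qed.

(** * Overlap patterns of two injections *)

Section Patterns.
Variables n m : nat.
Implicit Types P : pred 'I_m.

Definition rank_in P (j : 'I_m) := #|[set j' : 'I_m | (j' < j)%N && P j']|.

Lemma rank_in_lt P j : (rank_in P j < m)%N.
Proof.
rewrite (leq_ltn_trans _ (ltn_ord j)) // -[X in (_ <= X)%N](card_ltn (ltnW (ltn_ord j))).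
by apply: subset_leq_card; apply/subsetP => j'; rewrite !inE => /andP[].
Qed.

Lemma rank_in_mono P (j1 j2 : 'I_m) : (j1 < j2)%N -> P j1 -> (rank_in P j1 < rank_in P j2)%N.
Proof.
move=> lt12 Pj1; apply: proper_card; apply/properP; split.
  by apply/subsetP => j; rewrite !inE => /andP[/ltn_trans-> //].
by exists j1; rewrite !inE ?lt12 ?Pj1 ?ltnn.
Qed.

Lemma rank_in_inj P : {in P &, injective (rank_in P)}.
Proof.
move=> j1 j2 P1 P2 e; apply: val_inj; case: (ltngtP j1 j2) => // lt.
- by have := rank_in_mono lt P1; rewrite e ltnn.
- by have := rank_in_mono lt P2; rewrite e ltnn.
Qed.

Lemma rank_in_lt_card P j : P j -> (rank_in P j < #|P|)%N.
Proof.
move=> Pj; rewrite -(cardsE P); apply: proper_card; apply/properP; split.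
  by apply/subsetP => j'; rewrite !inE => /andP[].
by exists j; rewrite !inE ?ltnn.
Qed.

Implicit Types psi : {ffun 'I_m -> 'I_(n + m)}.

Definition fresh psi : pred 'I_m := fun j => (n <= psi j)%N.

(* psi j < n means that the j-th point of the second injection hits the image of
   the psi j-th point of the first one; the remaining (fresh) points are numbered
   n, n + 1, ... in increasing order. *)
Definition is_pattern psi : bool := injectiveb psi &&
  [forall j, fresh psi j ==> (psi j == n + rank_in (fresh psi) j :> nat)%N].

Definition pattern_size psi := (n + #|fresh psi|)%N.

Definition patterns := [set psi | is_pattern psi].

Lemma pattern_size_le psi : (pattern_size psi <= n + m)%N.
Proof. by rewrite leq_add2l -[X in (_ <= X)%N](card_ord m) max_card. Qed.

Section OnePattern.
Variables (psi : {ffun 'I_m -> 'I_(n + m)}) (Hpsi : is_pattern psi).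

Lemma pattern_inj : injective psi.
Proof. by case/andP: Hpsi => /injectiveP. Qed.

Lemma pattern_fresh j : fresh psi j -> psi j = (n + rank_in (fresh psi) j)%N :> nat.
Proof. by case/andP: Hpsi => _ /forallP /(_ j) /implyP H /H /eqP. Qed.

Lemma pattern_lt_size j : (psi j < pattern_size psi)%N.
Proof.
case: (leqP n (psi j)) => hj; last exact: leq_trans hj (leq_addr _ _).
by rewrite pattern_fresh // ltn_add2l rank_in_lt_card.
Qed.

Lemma pattern_onto i : (n <= i)%N -> (i < pattern_size psi)%N ->
  exists j, psi j = i :> nat.
Proof.
move=> ni ik; have iM : (i < n + m)%N := leq_trans ik (pattern_size_le psi).
pose J := [set i : 'I_(n + m) | (n <= i)%N && (i < pattern_size psi)%N].
have E : J = psi @: [set j | fresh psi j].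
  apply/eqP; rewrite eq_sym eqEcard; apply/andP; split.
    apply/subsetP => x /imsetP[j]; rewrite !inE => hj ->.
    by rewrite pattern_lt_size andbT.
  rewrite card_imset; last exact: pattern_inj.
  by rewrite card_interval ?leq_addr ?pattern_size_le // addKn cardsE.
have : Ordinal iM \in J by rewrite !inE ni ik.
by rewrite E => /imsetP[j _ e]; exists j; rewrite -e.
Qed.

End OnePattern.

Variable N : nat.
Implicit Types (phi : {ffun 'I_n -> 'I_N}) (chi : {ffun 'I_m -> 'I_N}).

Definition new_in phi chi : pred 'I_m := fun j => chi j \notin codom phi.

Definition pattern phi chi : {ffun 'I_m -> 'I_(n + m)} :=
  [ffun j => if [pick i | phi i == chi j] is Some i then lshift m i
             else rshift n (Ordinal (rank_in_lt (new_in phi chi) j))].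

Lemma pattern_old phi chi j i : injective phi -> phi i = chi j -> pattern phi chi j = i :> nat.
Proof.
move=> fi e; rewrite ffunE; case: pickP => [i' /eqP e'|/(_ i)]; last by rewrite e eqxx.
by rewrite /= (fi _ _ (etrans e' (esym e))).
Qed.

Lemma pattern_new phi chi j : new_in phi chi j ->
  pattern phi chi j = (n + rank_in (new_in phi chi) j)%N :> nat.
Proof. by rewrite /new_in ffunE; case: pickP => // i /eqP <-; rewrite codom_f. Qed.

Lemma fresh_pattern phi chi : injective phi -> fresh (pattern phi chi) =1 new_in phi chi.
Proof.
move=> fi j; rewrite /fresh; case: (boolP (new_in phi chi j)) => [h|/negPn/codomP[i e]].
  by rewrite pattern_new ?leq_addr.
by rewrite (pattern_old fi (esym e)) leqNgt ltn_ord.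
Qed.

Lemma pattern_is_pattern phi chi : injective phi -> injective chi ->
  is_pattern (pattern phi chi).
Proof.
move=> fi ci; have fr := @fresh_pattern phi chi fi.
have rk j : rank_in (fresh (pattern phi chi)) j = rank_in (new_in phi chi) j.
  by apply: eq_card => j'; rewrite !inE fr.
apply/andP; split; last first.
  by apply/forallP => j; apply/implyP; rewrite fr rk => /pattern_new ->.
apply/injectiveP => j1 j2 e.
have en : new_in phi chi j1 = new_in phi chi j2 by rewrite -!fr /fresh e.
case: (boolP (new_in phi chi j1)) en =>
  [n1 /esym n2|/negPn/codomP[i1 e1] /esym/negbT/negPn/codomP[i2 e2]].
- apply: (rank_in_inj n1 n2); apply/eqP; rewrite -(eqn_add2l n).
  by rewrite -!pattern_new // e.
- apply: ci; rewrite e1 e2; congr (phi _); apply: ord_inj.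
  by rewrite -(pattern_old fi (esym e1)) -(pattern_old fi (esym e2)) e.
Qed.

Section Splitting.
Variables (psi : {ffun 'I_m -> 'I_(n + m)}) (Hpsi : is_pattern psi).
Implicit Types w : {ffun 'I_(pattern_size psi) -> 'I_N}.

Definition emb_left w : {ffun 'I_n -> 'I_N} := [ffun i => w (widen_ord (leq_addr _ n) i)].

Definition emb_right w : {ffun 'I_m -> 'I_N} := [ffun j => w (Ordinal (pattern_lt_size Hpsi j))].

Lemma emb_left_inj w : injective w -> injective (emb_left w).
Proof. by move=> wi i j; rewrite !ffunE => /wi /(congr1 val) /= /val_inj. Qed.

Lemma emb_right_inj w : injective w -> injective (emb_right w).
Proof.
move=> wi i j; rewrite !ffunE => /wi /(congr1 val) /= e.
by apply: (pattern_inj Hpsi); apply: ord_inj.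
Qed.

Lemma new_in_emb w : injective w -> new_in (emb_left w) (emb_right w) =1 fresh psi.
Proof.
move=> wi j; rewrite /new_in /fresh; apply/idP/idP.
  apply: contraR; rewrite -ltnNge => hj; apply/codomP.
  by exists (Ordinal hj); rewrite !ffunE; congr (w _); apply: val_inj.
move=> hj; apply/codomP => -[o]; rewrite !ffunE => /wi /(congr1 val) /= e.
by move: (ltn_ord o); rewrite -e ltnNge hj.
Qed.

Lemma pattern_emb w : injective w -> pattern (emb_left w) (emb_right w) = psi.
Proof.
move=> wi; apply/ffunP => j; apply: ord_inj.
case: (leqP n (psi j)) => hj.
  rewrite pattern_new ?new_in_emb // (pattern_fresh Hpsi hj); congr (_ + _)%N.
  by apply: eq_card => j'; rewrite !inE new_in_emb.
rewrite -[nat_of_ord (psi j)]/(nat_of_ord (Ordinal hj)).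
apply: pattern_old; first exact: emb_left_inj.
by rewrite !ffunE; congr (w _); apply: val_inj.
Qed.

Lemma emb_pair_inj : injective (fun w => (emb_left w, emb_right w)).
Proof.
move=> w1 w2 [e1 e2]; apply/ffunP => i; case: (ltnP i n) => hi.
  have := congr1 (fun f : {ffun 'I_n -> 'I_N} => f (Ordinal hi)) e1.
  by rewrite !ffunE (_ : widen_ord _ _ = i) //; apply: val_inj.
have [j ej] := pattern_onto Hpsi hi (ltn_ord i).
have := congr1 (fun f : {ffun 'I_m -> 'I_N} => f j) e2.
by rewrite !ffunE (_ : Ordinal _ = i) //; apply: val_inj.
Qed.

Section Gluing.
Variables (phi : {ffun 'I_n -> 'I_N}) (chi : {ffun 'I_m -> 'I_N}).
Hypotheses (phi_inj : injective phi) (chi_inj : injective chi) (Hpat : pattern phi chi = psi).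

Lemma new_in_psi j : new_in phi chi j = (n <= psi j)%N.
Proof. by rewrite -fresh_pattern // Hpat. Qed.

Lemma glue_point (i : 'I_(pattern_size psi)) : exists d : 'I_N,
  (forall o : 'I_n, o = i :> nat -> d = phi o) /\ (forall j, psi j = i :> nat -> d = chi j).
Proof.
case: (ltnP i n) => hi.
  exists (phi (Ordinal hi)); split => [o e|j e]; first by congr (phi _); apply: val_inj.
  have /negPn/codomP[o eo] : ~~ new_in phi chi j by rewrite new_in_psi e -ltnNge.
  rewrite eo; congr (phi _); apply: val_inj.
  by rewrite /= -e -Hpat (pattern_old phi_inj (esym eo)).
have [j0 e0] := pattern_onto Hpsi hi (ltn_ord i).
exists (chi j0); split => [o e|j e]; first by move: (ltn_ord o); rewrite e ltnNge hi.
by congr (chi _); apply: (pattern_inj Hpsi); apply: ord_inj; rewrite e0 e.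
Qed.

Lemma emb_onto : exists2 w : {ffun 'I_(pattern_size psi) -> 'I_N},
  injective w & (emb_left w, emb_right w) = (phi, chi).
Proof.
have [u hu] := fin_all_exists glue_point.
have uphi (o : 'I_n) (i : 'I_(pattern_size psi)) : o = i :> nat -> u i = phi o.
  by move=> e; case: (hu i) => + _; apply.
have uchi j (i : 'I_(pattern_size psi)) : psi j = i :> nat -> u i = chi j.
  by move=> e; case: (hu i) => _; apply.
exists [ffun i => u i]; last first.
  congr pair; apply/ffunP => i; rewrite !ffunE; [exact: uphi | exact: uchi].
have cover (i : 'I_(pattern_size psi)) : (i < n)%N \/ exists2 j, psi j = i :> nat & (n <= psi j)%N.
  case: (ltnP i n) => hi; [by left | right].
  by have [j ej] := pattern_onto Hpsi hi (ltn_ord i); exists j; rewrite ej.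
move=> i1 i2; rewrite !ffunE.
case: (cover i1) => [h1|[j1 e1 n1]]; case: (cover i2) => [h2|[j2 e2 n2]].
- rewrite (uphi (Ordinal h1)) // (uphi (Ordinal h2)) //.
  by move/phi_inj/(congr1 val) => /= e; apply: val_inj.
- rewrite (uphi (Ordinal h1)) // (uchi j2) // => e.
  by move: n2; rewrite -new_in_psi /new_in -e codom_f.
- rewrite (uchi j1) // (uphi (Ordinal h2)) // => e.
  by move: n1; rewrite -new_in_psi /new_in e codom_f.
- by rewrite (uchi j1) // (uchi j2) // => /chi_inj ej; apply: val_inj; rewrite /= -e1 -e2 ej.
Qed.

End Gluing.

Lemma sum_pattern_fiber (M : nmodType) (F : {ffun 'I_n -> 'I_N} * {ffun 'I_m -> 'I_N} -> M) :
  \sum_(p | [&& p.1 \in injs n N, p.2 \in injs m N & pattern p.1 p.2 == psi]) F p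
  = \sum_(w in injs (pattern_size psi) N) F (emb_left w, emb_right w).
Proof.
rewrite -(big_imset _ (in2W emb_pair_inj)); apply: eq_bigl => -[phi chi] /=.
apply/idP/imsetP => [|[w]]; rewrite !inE.
  case/and3P => /injectiveP fi /injectiveP ci /eqP ep.
  by have [w wi ew] := emb_onto fi ci ep; exists w; rewrite // inE; apply/injectiveP.
move=> /injectiveP wi [-> ->]; rewrite pattern_emb // eqxx andbT.
by apply/andP; split; apply/injectiveP; [exact: emb_left_inj | exact: emb_right_inj].
Qed.

End Splitting.
End Patterns.

(** * Conjugation of elements of S(V) *)

Section Conjugation.
Variables (I : finType) (X : countType).
Local Notation V := (V I X).
Local Notation lift := (@lift_nat I X).
Implicit Types x y : V -> V.

Lemma lift_nat_comp (a b : nat -> nat) v : lift (a \o b) v = lift a (lift b v).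
Proof. by case: v => [x|[i j]]. Qed.

Lemma lift_nat_can (a b : nat -> nat) : cancel a b -> cancel (lift a) (lift b).
Proof. by move=> ab [x|[i j]] //=; rewrite ab. Qed.

Definition conj_lift (a a' : nat -> nat) x : V -> V := lift a \o x \o lift a'.

Lemma conjKE n (t : {perm 'I_n}) x : conjK t x = conj_lift (natperm t) (natperm t^-1) x.
Proof. by []. Qed.

Lemma conj_lift_comp a a' b b' x :
  conj_lift a a' (conj_lift b b' x) = conj_lift (a \o b) (b' \o a') x.
Proof. by apply: funext => v; rewrite /conj_lift /= (lift_nat_comp a b) (lift_nat_comp b' a'). Qed.

Definition supported k (x : V -> V) := forall v, ~~ inVn k v -> x v = v.

Lemma supported_inVn k x v : injective x -> supported k x -> inVn k v -> inVn k (x v).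
Proof.
move=> ix sx; apply: contraLR => nv.
by rewrite -(ix _ _ (sx _ nv)).
Qed.

Lemma supported_mono k k' x : (k <= k')%N -> supported k x -> supported k' x.
Proof.
move=> kk sx [c|[i j]] //= h; apply: sx; apply: contra h => /= h.
exact: leq_trans h kk.
Qed.

Lemma supported_comp k x y : supported k x -> supported k y -> supported k (x \o y).
Proof. by move=> sx sy v hv /=; rewrite sy // sx. Qed.

Lemma conjK_supported N (t : {perm 'I_N}) k K x : supported k x ->
  (forall i : 'I_k, (natperm t i < K)%N) -> supported K (conjK t x).
Proof.
move=> sx tK [c|[i j]] //= h; rewrite conjKE /conj_lift /=.
case: (ltnP (natperm t^-1 j) k) => hj; last by rewrite sx /= -?ltnNge // natpermKV.
by move: h; rewrite -[j](natpermKV t) (tK (Ordinal hj)).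
Qed.

Lemma conj_lift_local k a a' b b' x : injective x -> supported k x ->
  cancel a a' -> cancel a' a -> cancel b b' -> cancel b' b ->
  (forall j, (j < k)%N -> a j = b j) -> conj_lift a a' x = conj_lift b b' x.
Proof.
move=> ix sx aK aK' bK bK' ab.
have liftE w : inVn k w -> lift a w = lift b w by case: w => [c|[i j]] //= jk; rewrite ab.
apply: funext => -[c|[i j]]; rewrite /conj_lift /=.
  by rewrite liftE // (supported_inVn (v := inl c)).
case: (ltnP (a' j) k) => hj.
  have -> : b' j = a' j by rewrite -[in LHS](aK' j) ab // bK.
  by rewrite liftE // (supported_inVn (v := inr (i, _))).
have hb : (k <= b' j)%N.
  by rewrite leqNgt; apply: contraTN hj => hb; rewrite -ltnNge -[j](bK' j) -ab // aK.
by rewrite !sx /= -?ltnNge ?aK' ?bK'.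
Qed.

Lemma conjK_local k N N' (t : {perm 'I_N}) (s : {perm 'I_N'}) x :
  injective x -> supported k x ->
  (forall i : 'I_k, natperm t i = natperm s i) -> conjK t x = conjK s x.
Proof.
move=> ix sx ts; rewrite !conjKE.
apply: (conj_lift_local ix sx (natpermK t) (natpermKV t) (natpermK s) (natpermKV s)).
by move=> j jk; apply: (ts (Ordinal jk)).
Qed.

Lemma conjK_conjK k N N' (s : {perm 'I_N}) (t : {perm 'I_N'}) (u : {perm 'I_N}) x :
  injective x -> supported k x ->
  (forall i : 'I_k, natperm u i = natperm s (natperm t i)) -> conjK s (conjK t x) = conjK u x.
Proof.
move=> ix sx ust; rewrite !conjKE conj_lift_comp.
apply: (conj_lift_local ix sx _ _ (natpermK u) (natpermKV u)).
- exact: can_comp (natpermK s) (natpermK t).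
- exact: can_comp (natpermKV t) (natpermKV s).
- by move=> j jk; rewrite /= -(ust (Ordinal jk)).
Qed.

Lemma conjK1 n x : conjK (1 : {perm 'I_n}) x = x.
Proof.
have lift1 w : lift (natperm (1 : {perm 'I_n})) w = w by case: w => [c|[i j]] //=; rewrite natperm1.
by apply: funext => v; rewrite conjKE /conj_lift /= invg1 !lift1.
Qed.

Lemma conjK_mul n (s t : {perm 'I_n}) x : conjK s (conjK t x) = conjK (t * s) x.
Proof.
apply: funext => v; rewrite !conjKE /conj_lift /= -!lift_nat_comp invMg.
by congr (lift _ (x (lift _ v))); apply: funext => j /=; rewrite natpermM.
Qed.

Lemma conjK_comp n (t : {perm 'I_n}) x y : conjK t (x \o y) = conjK t x \o conjK t y.
Proof. by apply: funext => v; rewrite !conjKE /conj_lift /= (lift_nat_can (natpermK t)). Qed.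

Lemma conjK_can n (t : {perm 'I_n}) x x' : cancel x x' -> cancel (conjK t x) (conjK t x').
Proof.
move=> xK v; rewrite !conjKE /conj_lift /= (lift_nat_can (natpermK t)) xK.
exact: (lift_nat_can (natpermKV t)).
Qed.

(* By conjK_local, for x supported in V_k this does not depend on the chosen
   extension of f. *)
Definition conj_inj k N (f : {ffun 'I_k -> 'I_N}) (x : V -> V) : V -> V := conjK (perm_ext f) x.

Lemma conjK_prefix k N (H : (k <= N)%N) t x : injective x -> supported k x ->
  conjK t x = conj_inj (perm_prefix H t) x.
Proof.
move=> ix sx; apply: (conjK_local ix sx) => i.
by rewrite natperm_ext ?natperm_prefix //; apply: perm_prefix_inj.
Qed.

Lemma conj_inj_conjK k N (f : {ffun 'I_k -> 'I_N}) (t : {perm 'I_k}) x :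
  injective f -> injective x -> supported k x ->
  conj_inj f (conjK t x) = conj_inj [ffun i => f (t i)] x.
Proof.
move=> fi ix sx; have fti : injective [ffun i => f (t i)].
  by move=> i j; rewrite !ffunE => /fi /perm_inj.
by apply: (conjK_conjK ix sx) => i; rewrite natpermE !natperm_ext // ffunE.
Qed.

Lemma conj_inj_emb n m N (psi : {ffun 'I_m -> 'I_(n + m)}) (Hpsi : is_pattern psi)
    (w : {ffun 'I_(pattern_size psi) -> 'I_N}) (g h : V -> V) :
  injective w -> injective g -> supported n g -> injective h -> supported m h ->
  conj_inj (emb_left w) g \o conj_inj (emb_right Hpsi w) h
  = conj_inj w (g \o conjK (perm_ext psi) h).
Proof.
move=> wi ig sg ih sh; rewrite /conj_inj conjK_comp.
congr (_ \o _); [apply: (conjK_local ig sg) | apply/esym/(conjK_conjK ih sh)] => i.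
  rewrite natperm_ext ?ffunE; last exact: emb_left_inj.
  exact: esym (natperm_ext (widen_ord _ i) wi).
rewrite natperm_ext ?ffunE; last exact: emb_right_inj.
rewrite natperm_ext; last exact: pattern_inj.
exact: esym (natperm_ext (Ordinal (pattern_lt_size Hpsi i)) wi).
Qed.

End Conjugation.

(** * Coefficients of the elements A_N *)

Section Coefficients.
Variables (I : finType) (X : countType).
Local Notation V := (V I X).
Implicit Types x y g h : V -> V.

Lemma coefE (s : fsum I X) y : coef s y = \sum_(p <- s) p.1 * `[< p.2 = y >]%:R.
Proof. by apply: eq_bigr => p _; rewrite mulr_natr mulrb. Qed.

Lemma coef_fmul (s t : fsum I X) y :
  coef (fmul s t) y = \sum_(p <- s) \sum_(q <- t) p.1 * q.1 * `[< p.2 \o q.2 = y >]%:R.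
Proof. by rewrite coefE /fmul big_allpairs_dep. Qed.

Lemma coef_flatten (ss : seq (fsum I X)) y : coef (flatten ss) y = \sum_(s <- ss) coef s y.
Proof. by rewrite /coef big_flatten. Qed.

Lemma coef_fscale k (s : fsum I X) y : coef (fscale k s) y = k * coef s y.
Proof. by rewrite !coefE /fscale big_map mulr_sumr; apply: eq_bigr => p _; rewrite mulrA. Qed.

Lemma sum_AN N k x (F : (V -> V) -> Cplx) : injective x -> supported k x ->
  \sum_(p <- AN N (k, x)) p.1 * F p.2 = \sum_(f in injs k N) F (conj_inj f x).
Proof.
move=> ix sx; rewrite /AN /=; case: leqP => H; last first.
  by rewrite big_nil big_pred0 // => f; rewrite injs_small.
rewrite big_map big_enum /= -mulr_sumr.
rewrite (eq_bigr (fun t => F (conj_inj (perm_prefix H t) x))) => [|t _]; last first.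
  by rewrite -conjK_prefix.
rewrite (sum_perm_prefix H (fun f => F (conj_inj f x))) -[X in _ * X]mulr_natl.
rewrite mulrA mulVf ?mul1r //.
by rewrite pnatr_eq0 -lt0n fact_gt0.
Qed.

Definition embed_count N k x y : Cplx := \sum_(f in injs k N) `[< conj_inj f x = y >]%:R.

Lemma embed_count_small N k x y : (N < k)%N -> embed_count N k x y = 0.
Proof. by move=> Nk; rewrite /embed_count big_pred0 // => f; rewrite injs_small. Qed.

Lemma coef_AN N k x y : injective x -> supported k x ->
  coef (AN N (k, x)) y = embed_count N k x y.
Proof. by move=> ix sx; rewrite coefE (sum_AN _ (fun z => `[< z = y >]%:R) ix sx). Qed.

Definition pair_count N n g m h y : Cplx :=
  \sum_(f in injs n N) \sum_(f' in injs m N) `[< conj_inj f g \o conj_inj f' h = y >]%:R.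

Lemma coef_fmul_AN N n g m h y : injective g -> supported n g -> injective h -> supported m h ->
  coef (fmul (AN N (n, g)) (AN N (m, h))) y = pair_count N n g m h y.
Proof.
move=> ig sg ih sh; rewrite coef_fmul.
under eq_bigr => p _ do under eq_bigr => q _ do rewrite -mulrA.
under eq_bigr => p _ do rewrite -mulr_sumr (sum_AN _ (fun z => `[< p.2 \o z = y >]%:R) ih sh).
exact: (sum_AN _ (fun z => \sum_(f' in injs m N) `[< z \o conj_inj f' h = y >]%:R) ig sg).
Qed.

Lemma pair_count_patterns N n g m h y : injective g -> supported n g -> injective h -> supported m h ->
  pair_count N n g m h y =
  \sum_(psi in patterns n m) embed_count N (pattern_size psi) (g \o conjK (perm_ext psi) h) y.
Proof.
move=> ig sg ih sh; rewrite /pair_count pair_big_dep.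
rewrite (partition_big (fun p => pattern p.1 p.2) (mem (patterns n m))); last first.
  move=> p; rewrite !inE => /andP[/injectiveP fi /injectiveP ci].
  exact: pattern_is_pattern.
apply: eq_bigr => psi; rewrite !inE => Hpsi.
rewrite -(eq_bigl _ _ (fun p => andbA _ _ _)).
rewrite (sum_pattern_fiber Hpsi (fun p => `[< conj_inj p.1 g \o conj_inj p.2 h = y >]%:R)).
by apply: eq_bigr => w; rewrite inE => /injectiveP wi /=; rewrite conj_inj_emb.
Qed.

Lemma injs_perm k N (f : {ffun 'I_k -> 'I_N}) (t : {perm 'I_k}) :
  ([ffun i => f (t i)] \in injs k N) = (f \in injs k N).
Proof.
rewrite !inE; apply/injectiveP/injectiveP => fi i j.
  by move=> e; have := fi ((t^-1)%g i) ((t^-1)%g j); rewrite !ffunE !permKV => /(_ e) /perm_inj.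
by rewrite !ffunE => /fi /perm_inj.
Qed.

Lemma embed_count_conjK N k (t : {perm 'I_k}) x y : injective x -> supported k x ->
  embed_count N k (conjK t x) y = embed_count N k x y.
Proof.
move=> ix sx; pose h (f : {ffun 'I_k -> 'I_N}) : {ffun 'I_k -> 'I_N} := [ffun i => f (t i)].
have hK : cancel h (fun f => [ffun i => f ((t^-1)%g i)]).
  by move=> f; apply/ffunP => i; rewrite !ffunE permKV.
rewrite /embed_count [RHS](reindex_inj (can_inj hK)) /=.
apply: eq_big => f; first by rewrite injs_perm.
by rewrite inE => /injectiveP fi; rewrite conj_inj_conjK.
Qed.

Lemma embed_count_self_neq0 k x : injective x -> supported k x -> embed_count k k x x != 0.
Proof.
move=> ix sx; pose w0 : {ffun 'I_k -> 'I_k} := [ffun i => i].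
have w0i : injective w0 by move=> i j; rewrite !ffunE.
have w0x : conj_inj w0 x = x.
  rewrite /conj_inj -[RHS](conjK1 k x); apply: (conjK_local ix sx) => i.
  by rewrite natperm_ext // ffunE natpermE perm1.
rewrite /embed_count -natr_sum pnatr_eq0 -lt0n (bigD1 w0) ?inE /=; last exact/injectiveP.
by have -> : `[< conj_inj w0 x = x >] = true by apply/asboolP.
Qed.

Lemma embed_count_neq0 N k x y : embed_count N k x y != 0 ->
  exists f : {ffun 'I_k -> 'I_N}, conj_inj f x = y.
Proof.
have [//|nf] := pselect (exists f : {ffun 'I_k -> 'I_N}, conj_inj f x = y).
rewrite /embed_count big1 ?eqxx // => f _.
by case: asboolP => // e; case: nf; exists f.
Qed.

Section Cancel.
Variables (N n m : nat) (g g' h h' : V -> V).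

Lemma pair_count_right y : cancel h h' -> cancel h' h ->
  pair_count N n g m h y = \sum_(r in injs m N) embed_count N n g (y \o conj_inj r h').
Proof.
move=> hK hK'; rewrite /pair_count exchange_big; apply: eq_bigr => r _.
by apply: eq_bigr => f _; rewrite (asbool_comp_r _ _ (conjK_can _ hK) (conjK_can _ hK')).
Qed.

Lemma pair_count_left y : cancel g g' -> cancel g' g ->
  pair_count N n g m h y = \sum_(f in injs n N) embed_count N m h (conj_inj f g' \o y).
Proof.
move=> gK gK'; apply: eq_bigr => f _; rewrite /embed_count; apply: eq_bigr => r _.
by rewrite (asbool_comp_l _ _ (conjK_can _ gK) (conjK_can _ gK')).
Qed.

End Cancel.

Definition triple_count N n1 g1 n2 g2 n3 g3 y : Cplx :=
  \sum_(p in injs n1 N) \sum_(q in injs n2 N) \sum_(r in injs n3 N)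
    `[< conj_inj p g1 \o conj_inj q g2 \o conj_inj r g3 = y >]%:R.

Lemma triple_count_left N n1 g1 n2 g2 n3 g3 g3' y : cancel g3 g3' -> cancel g3' g3 ->
  triple_count N n1 g1 n2 g2 n3 g3 y =
  \sum_(r in injs n3 N) pair_count N n1 g1 n2 g2 (y \o conj_inj r g3').
Proof.
move=> gK gK'; rewrite /triple_count; under eq_bigr do rewrite exchange_big.
rewrite exchange_big; apply: eq_bigr => r _; apply: eq_bigr => p _; apply: eq_bigr => q _.
by rewrite (asbool_comp_r _ _ (conjK_can _ gK) (conjK_can _ gK')).
Qed.

Lemma triple_count_right N n1 g1 n2 g2 n3 g3 g1' y : cancel g1 g1' -> cancel g1' g1 ->
  triple_count N n1 g1 n2 g2 n3 g3 y =
  \sum_(p in injs n1 N) pair_count N n2 g2 n3 g3 (conj_inj p g1' \o y).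
Proof.
move=> gK gK'; apply: eq_bigr => p _; apply: eq_bigr => q _; apply: eq_bigr => r _.
by rewrite -(asbool_comp_l (conj_inj q g2 \o conj_inj r g3) _ (conjK_can _ gK) (conjK_can _ gK')).
Qed.

End Coefficients.

(** * Classes and structure constants *)

HB.instance Definition _ (I : finType) (X : countType) (G : (V I X -> V I X) -> Prop) :=
  gen_eqMixin (Cls G).

Section Classes.
Variables (I : finType) (X : countType) (G : (V I X -> V I X) -> Prop).
Hypotheses (HG : is_subgroup G) (HS : contains_Sinf G).
Local Notation V := (V I X).
Local Notation dim c := (clsrep c).1.
Local Notation elt c := (clsrep c).2.
Implicit Types (x y g h : V -> V) (c d e : Cls G).

Lemma G_bij x : G x -> bijective x.
Proof. by case: HG => H _ _ _ /H []. Qed.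

Lemma G_comp x y : G x -> G y -> G (x \o y).
Proof. by case: HG => _ _ H _; apply: H. Qed.

Lemma G_conjK n (t : {perm 'I_n}) x : G x -> G (conjK t x).
Proof.
have GK (s : {perm 'I_n}) : G (Defs.permK s).
  apply: HS; first by exists (natperm s^-1); [exact: natpermK | exact: natpermKV].
  by exists (iota 0 n) => j; rewrite mem_iota add0n /= -leqNgt; exact: natperm_out.
by move=> Gx; apply: G_comp; [apply: G_comp|].
Qed.

Lemma Gn_inj k x : Gn G k x -> injective x.
Proof. by case=> /G_bij /bij_inj. Qed.

Lemma Gn_supported k x : Gn G k x -> supported k x.
Proof. by case. Qed.

Lemma Gn_id : Gn G 0 id.
Proof. by split => //; case: HG. Qed.

Lemma Gn_pattern_product n m g h (psi : {ffun 'I_m -> 'I_(n + m)}) :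
  Gn G n g -> Gn G m h -> is_pattern psi -> Gn G (pattern_size psi) (g \o conjK (perm_ext psi) h).
Proof.
move=> [Gg sg] [Gh sh] Hpsi; split; first by apply: G_comp => //; apply: G_conjK.
apply: supported_comp; first exact: supported_mono (leq_addr _ _) sg.
apply: (conjK_supported sh) => j; rewrite natperm_ext; last exact: pattern_inj.
exact: pattern_lt_size.
Qed.

Lemma clsrepP c : Gn G (dim c) (elt c) /\ sval c = orbit_of (clsrep c).
Proof. by rewrite /clsrep; case: cid. Qed.

Lemma elt_inj c : injective (elt c).
Proof. exact: Gn_inj (proj1 (clsrepP c)). Qed.
Arguments elt_inj : clear implicits.

Lemma elt_supported c : supported (dim c) (elt c).
Proof. exact: Gn_supported (proj1 (clsrepP c)). Qed.
Arguments elt_supported : clear implicits.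

Lemma orbit_of_conjK n x (t : {perm 'I_n}) : orbit_of (n, conjK t x) = orbit_of (n, x).
Proof.
apply: funext => -[k z]; apply: propext; rewrite /orbit_of /=.
split=> -[-> [s ->]]; split => //; first by exists (t * s)%g; rewrite conjK_mul.
by exists (t^-1 * s)%g; rewrite conjK_mul mulKVg.
Qed.

Lemma Cls_inj c d : sval c = sval d -> c = d.
Proof. by case: c d => S pS [S' pS'] /= e; subst S'; congr exist; exact: Prop_irrelevance. Qed.

Lemma cls_eq N c d (t : {perm 'I_N}) : dim c = N -> dim d = N -> elt c = conjK t (elt d) -> c = d.
Proof.
move=> ec ed et; apply: Cls_inj; rewrite (proj2 (clsrepP c)) (proj2 (clsrepP d)).
by move: (clsrep c) (clsrep d) ec ed et => [k x] [n z] /= -> -> ->; rewrite orbit_of_conjK.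
Qed.

(* The class of (k, x) if x lies in G_k, and the class of the identity otherwise. *)
Definition cls_of k x : Cls G :=
  if pselect (Gn G k x) is left H then exist _ (orbit_of (k, x)) (ex_intro _ (k, x) (conj H erefl))
  else exist _ (orbit_of (0%N, id)) (ex_intro _ (0%N, id) (conj Gn_id erefl)).

Lemma cls_ofP k x : Gn G k x ->
  dim (cls_of k x) = k /\ exists t : {perm 'I_k}, elt (cls_of k x) = conjK t x.
Proof.
move=> H; have [_ e] := clsrepP (cls_of k x).
have : orbit_of (clsrep (cls_of k x)) (clsrep (cls_of k x)).
  by split => //; exists 1%g; rewrite conjK1.
by rewrite -e /cls_of; case: pselect => [H' /= [-> [t ->]]|/(_ H)//]; split => //; exists t.
Qed.

Definition cls_count N e y := embed_count N (dim e) (elt e) y.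

Lemma cls_count_cls_of N k x y : Gn G k x -> cls_count N (cls_of k x) y = embed_count N k x y.
Proof.
move=> H; have [ek [t et]] := cls_ofP H.
by rewrite /cls_count et ek embed_count_conjK //; [exact: Gn_inj H | exact: Gn_supported H].
Qed.

Lemma coef_AN_cls N e y : coef (AN N (clsrep e)) y = cls_count N e y.
Proof. by rewrite /cls_count -(coef_AN _ _ (elt_inj e) (elt_supported e)) -surjective_pairing. Qed.

Lemma cls_count_self_neq0 e : cls_count (dim e) e (elt e) != 0.
Proof. exact: embed_count_self_neq0 (elt_inj e) (elt_supported e). Qed.

Lemma cls_count_eq0 N e e' : dim e = N -> (N <= dim e')%N -> e' != e ->
  cls_count N e' (elt e) = 0.
Proof.
move=> de; rewrite leq_eqVlt => /predU1P[eN ne|lt _]; last exact: embed_count_small.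
apply/eqP; apply: contraNT ne => /embed_count_neq0 [f ef].
by rewrite (cls_eq (t := perm_ext f) de (esym eN) (esym ef)).
Qed.

Lemma cls_count_indep (L R : Cls G -> nat) (U : seq (Cls G)) : uniq U ->
  (forall N y, \sum_(e <- U) (L e)%:R * cls_count N e y = \sum_(e <- U) (R e)%:R * cls_count N e y) ->
  {in U, L =1 R}.
Proof.
move=> uU E e eU; move: {2}(dim e).+1 (ltnSn (dim e)) => k.
elim: k e eU => // k IH e eU.
rewrite ltnS leq_eqVlt => /predU1P[ek|]; last exact: IH.
(* At N = dim e and y = elt e, classes of size >= dim e other than e do not contribute. *)
have /eqP := E k (elt e); rewrite -subr_eq0 -sumrB (bigD1_seq e) //= big1_seq ?addr0.
  rewrite -mulrBl mulf_eq0 -ek (negPf (cls_count_self_neq0 e)) orbF.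
  by rewrite subr_eq0 eqr_nat => /eqP.
move=> e' /andP[ne e'U]; case: (ltnP (dim e') k) => [lt|ge].
  by rewrite IH // subrr.
by rewrite cls_count_eq0 // !mulr0 subrr.
Qed.

Definition product_class c d (psi : {ffun 'I_(dim d) -> 'I_(dim c + dim d)}) : Cls G :=
  cls_of (pattern_size psi) (elt c \o conjK (perm_ext psi) (elt d)).

Definition product_classes c d : seq (Cls G) :=
  [seq product_class psi | psi <- enum (patterns (dim c) (dim d))].

Definition struct_const c d e : nat := count_mem e (product_classes c d).

Definition struct_supp c d : seq (Cls G) := undup (product_classes c d).

Lemma struct_const_supp c d e : struct_const c d e != 0%N -> e \in struct_supp c d.
Proof. by rewrite /struct_const mem_undup; apply: contraR => /count_memPn ->. Qed.

Lemma pair_count_classes N c d y :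
  pair_count N (dim c) (elt c) (dim d) (elt d) y =
  \sum_(e <- struct_supp c d) (struct_const c d e)%:R * cls_count N e y.
Proof.
have [[Hc _] [Hd _]] := (clsrepP c, clsrepP d).
rewrite (pair_count_patterns _ _ (elt_inj c) (elt_supported c) (elt_inj d) (elt_supported d)).
under [RHS]eq_bigr do rewrite mulr_natl.
rewrite /struct_supp /struct_const sumr_undup_count /product_classes big_map big_enum /=.
apply: eq_bigr => psi; rewrite inE => Hpsi.
by rewrite cls_count_cls_of //; apply: Gn_pattern_product.
Qed.

Lemma AN_mul N c d :
  feq (fmul (AN N (clsrep c)) (AN N (clsrep d)))
      (flatten [seq fscale (struct_const c d e)%:R (AN N (clsrep e)) | e <- struct_supp c d]).
Proof.
move=> y; rewrite [clsrep c]surjective_pairing [clsrep d]surjective_pairing.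
rewrite (coef_fmul_AN _ _ (elt_inj c) (elt_supported c) (elt_inj d) (elt_supported d)).
rewrite pair_count_classes coef_flatten big_map.
by apply: eq_bigr => e _; rewrite coef_fscale coef_AN_cls.
Qed.

(* Both sides count the triples of injections (p, q, r) with
   conj_inj p (elt c) \o conj_inj q (elt d) \o conj_inj r (elt f) = y. *)
Lemma struct_const_assoc_count N c d f y :
  \sum_(e <- struct_supp c d) (struct_const c d e)%:R * pair_count N (dim e) (elt e) (dim f) (elt f) y =
  \sum_(e <- struct_supp d f) (struct_const d f e)%:R * pair_count N (dim c) (elt c) (dim e) (elt e) y.
Proof.
have [[[Gc _] _] [[Gf _] _]] := (clsrepP c, clsrepP f).
have [[c' cK cK'] [f' fK fK']] := (G_bij Gc, G_bij Gf).
transitivity (triple_count N (dim c) (elt c) (dim d) (elt d) (dim f) (elt f) y).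
  rewrite (triple_count_left _ _ _ _ _ _ _ fK fK').
  under [RHS]eq_bigr do rewrite pair_count_classes.
  rewrite [RHS]exchange_big; apply: eq_bigr => e _.
  by rewrite (pair_count_right _ _ _ _ _ fK fK') mulr_sumr.
rewrite (triple_count_right _ _ _ _ _ _ _ cK cK').
under eq_bigr do rewrite pair_count_classes.
rewrite exchange_big; apply: eq_bigr => e _.
by rewrite (pair_count_left _ _ _ _ _ cK cK') mulr_sumr.
Qed.

Lemma struct_const_assoc c d f (h : Cls G) :
  (\sum_(e <- struct_supp c d) struct_const c d e * struct_const e f h =
   \sum_(e <- struct_supp d f) struct_const d f e * struct_const c e h)%N.
Proof.
pose U := undup (flatten [seq struct_supp e f | e <- struct_supp c d] ++
                 flatten [seq struct_supp c e | e <- struct_supp d f]).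
have inUl e : e \in struct_supp c d -> {subset struct_supp e f <= U}.
  by move=> eS b bS; rewrite mem_undup mem_cat; apply/orP; left; apply/flatten_mapP; exists e.
have inUr e : e \in struct_supp d f -> {subset struct_supp c e <= U}.
  by move=> eS b bS; rewrite mem_undup mem_cat; apply/orP; right; apply/flatten_mapP; exists e.
case: (boolP (h \in U)) => hU.
  pose L b := (\sum_(e <- struct_supp c d) struct_const c d e * struct_const e f b)%N.
  pose R b := (\sum_(e <- struct_supp d f) struct_const d f e * struct_const c e b)%N.
  apply: (@cls_count_indep L R U (undup_uniq _) _ h hU) => N y.
  have := struct_const_assoc_count N c d f y.
  under eq_bigr do rewrite pair_count_classes.
  under [in X in _ = X -> _]eq_bigr do rewrite pair_count_classes.
  rewrite (sum_regroup _ _ (undup_uniq _) (fun e => undup_uniq _) inUl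
            (fun e b => @struct_const_supp e f b)).
  by rewrite (sum_regroup _ _ (undup_uniq _) (fun e => undup_uniq _) inUr
            (fun e b => @struct_const_supp c e b)).
rewrite !big1_seq // => e /andP[_ eS]; apply/eqP; rewrite muln_eq0; apply/orP; right.
  by apply: contraNT hU => /struct_const_supp; apply: inUr.
by apply: contraNT hU => /struct_const_supp; apply: inUl.
Qed.

End Classes.

Theorem theorem2p1 (I : finType) (X : countType)
  (G : (V I X -> V I X) -> Prop)
  (HG : is_subgroup G) (HS : contains_Sinf G) :
  exists (a : Cls G -> Cls G -> Cls G -> nat)
         (supp : Cls G -> Cls G -> seq (Cls G)),
    (forall c d, List.NoDup (supp c d)) /\
    (forall c d e, a c d e <> 0%N -> List.In e (supp c d)) /\
    (forall (N : nat) (c d : Cls G),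
        feq (fmul (AN N (clsrep c)) (AN N (clsrep d)))
            (flatten [seq fscale (a c d e)%:R (AN N (clsrep e)) | e <- supp c d])) /\
    (forall c d f h : Cls G,
        (\sum_(e <- supp c d) a c d e * a e f h =
         \sum_(e <- supp d f) a d f e * a c e h)%N).
Proof.
exists (struct_const HG), (struct_supp HG); split.
  by move=> c d; apply/uniq_NoDup/undup_uniq.
split; first by move=> c d e /eqP /struct_const_supp /In_mem.
split; first exact: AN_mul.
exact: struct_const_assoc.
Qed.
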